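(* Let $E$ be a regular biordered set satisfying (E1), (E2), (E3) below, and let $e_1,\dots,e_n\in E$ satisfy $M(e_i,e_j)=\{0\}$ for all $i\ne j$. Then the element $e_1\oplus e_2\oplus\cdots\oplus e_n$ is well defined (inductively, $((e_1\oplus e_2)\oplus e_3)\oplus\cdots$, each step being defined), the elements $\mathcal L(e_1),\dots,\mathcal L(e_n)$ are independent in the lattice $L(E)=E/\mathcal L$, and $\mathcal L(e_1)\vee\cdots\vee\mathcal L(e_n)=\mathcal L(e_1\oplus\cdots\oplus e_n)$. Conditions: (E1) there exists $0\in E$ with $0\,\omega\,x$ for every $x\in E$; (E2) there is a map $x\mapsto x'$ on $E$ such that for all $x,y\in E$: $(x')'=x$; $y\,\omega^l\,x$ iff $x'\,\omega^r\,y'$; $y\,\omega^l\,x'$ iff $M(y,x)=\{0\}$; (E3) for all $x,y\in E$, if $y\,\omega\,x'$ then $S(x',y')\cap S(y',x')\ne\emptyset$.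
   Context: A regular biordered set is a partial algebra isomorphic to the set of idempotents $E(S)$ of a regular semigroup $S$ (regular: every $x$ has $y$ with $xyx=x$), where $ef$ (computed in $S$) is defined when $\{ef,fe\}\cap\{e,f\}\ne\emptyset$. In $E$: $\omega^l=\{(e,f): ef=e\}$, $\omega^r=\{(e,f): fe=e\}$, $\omega=\omega^l\cap\omega^r$; $M(e,f)=\{g\in E: g\,\omega^l\,e,\ g\,\omega^r\,f\}$; for $g,h\in M(e,f)$, $g\preceq h$ iff $eg\,\omega^r\,eh$ and $gf\,\omega^l\,hf$; $S(e,f)=\{h\in M(e,f): g\preceq h\text{ for all }g\in M(e,f)\}$. Under (E1)–(E3), for $f\,\omega\,e'$ the set $S(e',f')\cap S(f',e')$ has exactly one element $k$, and $e\oplus f:=k'$ (defined only when $f\,\omega\,e'$). $\mathcal L=\omega^l\cap(\omega^l)^{-1}$ with classes $\mathcal L(e)$; $E/\mathcal L$ is ordered by $\mathcal L(e)\le\mathcal L(f)$ iff $e\,\omega^l\,f$ (a lattice with least element $\mathcal L(0)$). Elements $a_1,\dots,a_n$ of a lattice with least element $0$ are independent if $a_i\wedge\bigvee_{j\ne i}a_j=0$ for each $i$. *)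

(* A regular biordered set is (up to isomorphism) the set E(S)
   of idempotents of a regular semigroup S, with the biorder relations
   computed from the product of S.  We therefore work with an arbitrary
   regular semigroup (S, mul) and restrict all quantifiers to idempotents. *)
From Stdlib Require Import Arith.
Set Implicit Arguments.

Section Biorder.
Variable T : Type.
Variable mul : T -> T -> T.

Definition assoc_law : Prop := forall x y z, mul x (mul y z) = mul (mul x y) z.
Definition regular_law : Prop := forall x, exists y, mul (mul x y) x = x.

Definition idem (x : T) : Prop := mul x x = x.

Definition omegal (e f : T) : Prop := mul e f = e.
Definition omegar (e f : T) : Prop := mul f e = e.
Definition omega (e f : T) : Prop := omegal e f /\ omegar e f.

Definition Mset (e f g : T) : Prop := idem g /\ omegal g e /\ omegar g f.

Definition preceq (e f g h : T) : Prop :=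
  omegar (mul e g) (mul e h) /\ omegal (mul g f) (mul h f).

Definition Sset (e f h : T) : Prop :=
  Mset e f h /\ forall g, Mset e f g -> preceq e f g h.

Definition M_is_singleton (e f z : T) : Prop := forall g, Mset e f g <-> g = z.

Variable zero : T.
Variable prime : T -> T.

Definition E1 : Prop := idem zero /\ forall x, idem x -> omega zero x.

Definition E2 : Prop :=
  (forall x, idem x -> idem (prime x)) /\
  (forall x, idem x -> prime (prime x) = x) /\
  (forall x y, idem x -> idem y -> (omegal y x <-> omegar (prime x) (prime y))) /\
  (forall x y, idem x -> idem y -> (omegal y (prime x) <-> M_is_singleton y x zero)).

Definition E3 : Prop :=
  forall x y, idem x -> idem y -> omega y (prime x) ->
    exists k, Sset (prime x) (prime y) k /\ Sset (prime y) (prime x) k.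

(* e ⊕ f = r : defined only when f ω e', and then r = k' for k in
   S(e',f') ∩ S(f',e') (a set which the paper shows is a singleton). *)
Definition oplus_rel (e f r : T) : Prop :=
  omega f (prime e) /\
  exists k, Sset (prime e) (prime f) k /\ Sset (prime f) (prime e) k /\ r = prime k.

Fixpoint osum (es : nat -> T) (k : nat) (r : T) : Prop :=
  match k with
  | 0 => False
  | 1 => r = es 0
  | S k' => exists s, osum es k' s /\ oplus_rel s (es k') r
  end.

(* u represents the join, in E/L ordered by ω^l, of the classes L(x)
   for x ranging over the idempotents satisfying P *)
Definition is_L_join (P : T -> Prop) (u : T) : Prop :=
  idem u /\ (forall x, P x -> omegal x u) /\
  (forall v, idem v -> (forall x, P x -> omegal x v) -> omegal u v).

(* L(a) ∧ L(b) = L(0) in E/L *)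
Definition L_meet_zero (a b : T) : Prop :=
  forall g, idem g -> omegal g a -> omegal g b -> omegal g zero.

End Biorder.

(* By (E2), M(e_i, e_j) = {0} says e_i ω e_j'.  If f ω s' and
   k ∈ S(s', f') ∩ S(f', s'), then, since ' maps ω^l onto the converse of ω^r,
   the maximality of k in S(s', f') makes k' the ω^l-join of s and f, and
   makes every g with g ω s', g ω f' satisfy g ω k.  Inductively the sum r of
   e_1, ..., e_m is defined, represents L(e_1) ∨ ... ∨ L(e_m), and e_i ω r'
   for i > m, so the next sum is defined.  Doing the same without e_i gives a
   join u with e_i ω^l u'; any g below e_i and u then has g ω^l u', i.e.
   M(g, u) = {0}, and since ug ∈ M(g, u) we get g = g(ug) = g0. *)
From Stdlib Require Import Arith Lia.
Set Implicit Arguments.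

Definition skip (i j : nat) : nat := if j <? i then j else S j.

Lemma skip_neq i j : skip i j <> i.
Proof. unfold skip. destruct (Nat.ltb_spec j i); lia. Qed.

Lemma skip_lt i j m : j < m -> skip i j < S m.
Proof. unfold skip. destruct (Nat.ltb_spec j i); lia. Qed.

Lemma skip_lt_mono i j k : j < k -> skip i j < skip i k.
Proof. unfold skip. destruct (Nat.ltb_spec j i), (Nat.ltb_spec k i); lia. Qed.

Lemma skip_onto i j m :
  i < S m -> j < S m -> j <> i -> exists j', j' < m /\ skip i j' = j.
Proof.
  intros Hi Hj Hji. destruct (Nat.ltb_spec j i).
  - exists j. unfold skip. destruct (Nat.ltb_spec j i); split; lia.
  - exists (j - 1). unfold skip. destruct (Nat.ltb_spec (j - 1) i); split; lia.
Qed.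

Section Biorder.
Variables (T : Type) (mul : T -> T -> T) (zero : T) (prime : T -> T).
Hypothesis Hassoc : assoc_law mul.

Lemma omegal_trans x y z : omegal mul x y -> omegal mul y z -> omegal mul x z.
Proof.
  unfold omegal. intros Hxy Hyz.
  rewrite <- Hxy, <- Hassoc, Hyz. reflexivity.
Qed.

(* Each of k, k' is ≼ the other, which forces k' k = k and k' k = k'. *)
Lemma Sset_inter_unique a b k k' :
  Sset mul a b k -> Sset mul b a k -> Sset mul a b k' -> Sset mul b a k' -> k = k'.
Proof.
  intros [Mk Sk] [[_ [Kb Ka]] _] [Mk' Sk'] [[_ [K'b K'a]] _].
  destruct (Sk' k Mk) as [Hkk' _]. destruct (Sk k' Mk') as [_ Hk'k].
  unfold omegar, omegal in *.
  rewrite Ka, K'a in Hkk'. rewrite K'b, Kb in Hk'k.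
  congruence.
Qed.

Lemma osum_functional (f : nat -> T) k r r' :
  osum mul prime f k r -> osum mul prime f k r' -> r = r'.
Proof.
  revert r r'. induction k as [|[|k] IH]; intros r r' Hr Hr'.
  - destruct Hr.
  - simpl in *. congruence.
  - destruct Hr as [s [Hs [_ [K [SK1 [SK2 ->]]]]]].
    destruct Hr' as [s' [Hs' [_ [K' [SK1' [SK2' ->]]]]]].
    rewrite <- (IH _ _ Hs Hs') in SK1', SK2'.
    rewrite (Sset_inter_unique SK1 SK2 SK1' SK2'). reflexivity.
Qed.

Lemma Sset_omega a b k g :
  Sset mul a b k -> Mset mul b a k -> idem mul g ->
  omega mul g a -> omega mul g b -> omega mul g k.
Proof.
  intros [Mk Smax] [_ [Kb Ka]] Ig [Ga1 Ga2] [Gb1 Gb2].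
  destruct (Smax g (conj Ig (conj Ga1 Gb2))) as [Hl Hr].
  unfold omegal, omegar in *.
  rewrite Ka, Ga2 in Hl. rewrite Gb1, Kb in Hr.
  split; assumption.
Qed.

(* The witness is g := v a ∈ M(a, b); then k (v a) = v a, and v a v = v. *)
Lemma Sset_omegar a b k v :
  Sset mul a b k -> Mset mul b a k -> idem mul a -> idem mul v ->
  omegar mul v a -> omegar mul v b -> omegar mul v k.
Proof.
  unfold omegar, idem. intros [_ Smax] [_ [_ Ka]] Ia Iv Hva Hvb.
  unfold omegar in Ka.
  assert (Hvav : mul (mul v a) v = v) by (rewrite <- Hassoc, Hva; exact Iv).
  assert (Mg : Mset mul a b (mul v a)).
  { split; [|split]; unfold idem, omegal, omegar.
    - rewrite Hassoc, Hvav. reflexivity.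
    - rewrite <- Hassoc, Ia. reflexivity.
    - rewrite Hassoc, Hvb. reflexivity. }
  destruct (Smax _ Mg) as [Hl _]. unfold omegar in Hl.
  rewrite Ka, (Hassoc a v a), Hva in Hl.
  rewrite <- Hvav at 1. rewrite Hassoc, Hl. exact Hvav.
Qed.

Lemma is_L_join_ext (P Q : T -> Prop) u :
  (forall x, P x <-> Q x) -> is_L_join mul P u -> is_L_join mul Q u.
Proof.
  intros HPQ [Iu [Hup Hleast]]. split; [exact Iu|split].
  - intros x Hx. apply Hup, HPQ, Hx.
  - intros v Iv Hv. apply Hleast; [exact Iv|]. intros x Hx. apply Hv, HPQ, Hx.
Qed.

Lemma is_L_join_single x : idem mul x -> is_L_join mul (fun y => y = x) x.
Proof.
  intros Ix. split; [exact Ix|split].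
  - intros y ->. exact Ix.
  - intros v _ Hv. apply Hv. reflexivity.
Qed.

Lemma is_L_join_add (P : T -> Prop) s f r :
  is_L_join mul P s -> is_L_join mul (fun x => x = s \/ x = f) r ->
  is_L_join mul (fun x => P x \/ x = f) r.
Proof.
  intros [_ [HupP HleastP]] [Ir [Hup Hleast]]. split; [exact Ir|split].
  - intros x [Px | ->].
    + apply omegal_trans with s; [apply HupP, Px | apply Hup; left; reflexivity].
    + apply Hup. right. reflexivity.
  - intros v Iv Hv. apply Hleast; [exact Iv|].
    intros x [-> | ->].
    + apply HleastP; [exact Iv|]. intros x Px. apply Hv. left. exact Px.
    + apply Hv. right. reflexivity.
Qed.

Section Duality.
Hypothesis HE2 : E2 mul zero prime.

Lemma prime_idem x : idem mul x -> idem mul (prime x).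
Proof. apply (proj1 HE2). Qed.

Lemma prime_involutive x : idem mul x -> prime (prime x) = x.
Proof. apply (proj1 (proj2 HE2)). Qed.

Lemma omegal_iff_omegar_prime x y :
  idem mul x -> idem mul y -> (omegal mul y x <-> omegar mul (prime x) (prime y)).
Proof. apply (proj1 (proj2 (proj2 HE2))). Qed.

Lemma omegal_prime_iff_M_zero x y :
  idem mul x -> idem mul y -> (omegal mul y (prime x) <-> M_is_singleton mul y x zero).
Proof. apply (proj2 (proj2 (proj2 HE2))). Qed.

Lemma omega_prime_of_M_zero x y :
  idem mul x -> idem mul y -> M_is_singleton mul x y zero ->
  M_is_singleton mul y x zero -> omega mul x (prime y).
Proof.
  intros Ix Iy Mxy Myx. split.
  - apply omegal_prime_iff_M_zero; assumption.
  - apply omegal_prime_iff_M_zero in Myx; [|assumption..].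
    apply omegal_iff_omegar_prime in Myx; [|apply prime_idem; assumption|assumption].
    rewrite prime_involutive in Myx; assumption.
Qed.

Lemma oplus_L_join s f r :
  idem mul s -> idem mul f -> oplus_rel mul prime s f r ->
  is_L_join mul (fun x => x = s \/ x = f) r.
Proof.
  intros Is If [_ [k [SK1 [SK2 ->]]]].
  pose proof SK1 as [[Ik [_ Kf]] _]. pose proof SK2 as [MK2 _].
  pose proof MK2 as [_ [_ Ks]].
  assert (Ik' : idem mul (prime k)) by (apply prime_idem; exact Ik).
  split; [exact Ik'|split].
  - intros x [-> | ->]; apply omegal_iff_omegar_prime; try assumption;
      rewrite prime_involutive; assumption.
  - intros v Iv Hv.
    assert (Hsv : omegal mul s v) by (apply Hv; left; reflexivity).
    assert (Hfv : omegal mul f v) by (apply Hv; right; reflexivity).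
    apply omegal_iff_omegar_prime in Hsv, Hfv; try assumption.
    apply omegal_iff_omegar_prime; try assumption.
    rewrite prime_involutive by exact Ik.
    apply Sset_omegar with (prime s) (prime f); try assumption;
      apply prime_idem; assumption.
Qed.

Lemma oplus_prime_omega s f r g :
  idem mul s -> idem mul f -> oplus_rel mul prime s f r -> idem mul g ->
  omega mul g (prime s) -> omega mul g (prime f) -> omega mul g (prime r).
Proof.
  intros Is If [_ [k [SK1 [SK2 ->]]]] Ig Hgs Hgf.
  rewrite prime_involutive by apply SK1.
  apply Sset_omega with (prime s) (prime f); [exact SK1|apply SK2|assumption..].
Qed.

Lemma L_meet_zero_of_omegal_prime a u :
  idem mul a -> idem mul u -> omegal mul a (prime u) -> L_meet_zero mul zero a u.
Proof.
  intros Ia Iu Hau g Ig Hga Hgu.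
  assert (Mgu : M_is_singleton mul g u zero).
  { apply omegal_prime_iff_M_zero; [assumption..|].
    apply omegal_trans with a; assumption. }
  unfold omegal, idem in *.
  assert (Hug : mul u g = zero).
  { apply Mgu. split; [|split]; unfold idem, omegal, omegar.
    - rewrite Hassoc, <- (Hassoc u g u), Hgu, <- Hassoc, Ig. reflexivity.
    - rewrite <- Hassoc, Ig. reflexivity.
    - rewrite Hassoc, Iu. reflexivity. }
  rewrite <- Hug, Hassoc, Hgu. exact Ig.
Qed.

Section Sums.
Hypothesis HE3 : E3 mul prime.

Lemma oplus_exists s f :
  idem mul s -> idem mul f -> omega mul f (prime s) -> exists r, oplus_rel mul prime s f r.
Proof.
  intros Is If Hfs. destruct (HE3 Is If Hfs) as [k [SK1 SK2]].
  exists (prime k). split; [exact Hfs|]. exists k. auto.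
Qed.

Lemma osum_L_join n (f : nat -> T) :
  (forall i, i < n -> idem mul (f i)) ->
  (forall i j, j < i -> i < n -> omega mul (f i) (prime (f j))) ->
  forall m, S m <= n ->
  exists r, osum mul prime f (S m) r /\
    is_L_join mul (fun x => exists j, j < S m /\ x = f j) r /\
    forall g, idem mul g -> (forall j, j < S m -> omega mul g (prime (f j))) ->
      omega mul g (prime r).
Proof.
  intros Hf Hp. induction m as [|m IH]; intros Hm.
  - exists (f 0). split; [reflexivity|split].
    + apply is_L_join_ext with (fun y => y = f 0).
      * intros x. split; [intros ->; exists 0; auto|].
        intros [j [Hj ->]]. replace j with 0 by lia. reflexivity.
      * apply is_L_join_single, Hf. lia.
    + intros g _ Hg. apply Hg. lia.
  - destruct (IH ltac:(lia)) as [s [Hs [Js Gs]]].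
    assert (Is : idem mul s) by apply (proj1 Js).
    assert (If : idem mul (f (S m))) by (apply Hf; lia).
    assert (Hfs : omega mul (f (S m)) (prime s)).
    { apply Gs; [exact If|]. intros j Hj. apply Hp; lia. }
    destruct (oplus_exists Is If Hfs) as [r Hr].
    exists r. split; [exists s; auto|split].
    + apply is_L_join_ext with (fun x => (exists j, j < S m /\ x = f j) \/ x = f (S m)).
      * intros x. split.
        -- intros [[j [Hj ->]] | ->]; [exists j | exists (S m)]; split; auto; lia.
        -- intros [j [Hj ->]]. destruct (Nat.eq_dec j (S m)) as [-> | Hne].
           ++ right. reflexivity.
           ++ left. exists j. split; [lia|reflexivity].
      * apply is_L_join_add with s; [exact Js|]. apply oplus_L_join; assumption.
    + intros g Ig Hg. apply oplus_prime_omega with s (f (S m)); try assumption.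
      * apply Gs; [exact Ig|]. intros j Hj. apply Hg. lia.
      * apply Hg. lia.
Qed.

Hypothesis HE1 : E1 mul zero.

Lemma L_independent n (e : nat -> T) :
  (forall i, i < n -> idem mul (e i)) ->
  (forall i j, i < n -> j < n -> i <> j -> omega mul (e i) (prime (e j))) ->
  forall i, i < n ->
  exists u, is_L_join mul (fun x => exists j, j < n /\ j <> i /\ x = e j) u /\
            L_meet_zero mul zero (e i) u.
Proof.
  intros He Hpair i Hi. destruct n as [|[|m]]; [lia| |].
  - exists zero. destruct HE1 as [Iz Hz]. split.
    + split; [exact Iz|split].
      * intros x [j [Hj [Hji _]]]. lia.
      * intros v Iv _. apply (Hz v Iv).
    + intros g _ _ Hg. exact Hg.
  - set (f := fun j => e (skip i j)).
    assert (Hf : forall j, j < S m -> idem mul (f j)).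
    { intros j Hj. apply He, skip_lt. exact Hj. }
    assert (Hpf : forall j k, k < j -> j < S m -> omega mul (f j) (prime (f k))).
    { intros j k Hkj Hj. apply Hpair; try apply skip_lt; try lia.
      pose proof (skip_lt_mono i Hkj). lia. }
    destruct (osum_L_join f Hf Hpf (le_n (S m))) as [u [_ [Ju Gu]]].
    exists u. split.
    + apply is_L_join_ext with (2 := Ju). intros x. split.
      * intros [j [Hj ->]]. exists (skip i j).
        split; [apply skip_lt; exact Hj|split; [apply skip_neq|reflexivity]].
      * intros [j [Hj [Hji ->]]]. destruct (skip_onto Hi Hj Hji) as [j' [Hj' <-]].
        exists j'. split; [lia|reflexivity].
    + apply L_meet_zero_of_omegal_prime; [apply He; exact Hi|exact (proj1 Ju)|].
      apply Gu; [apply He; exact Hi|]. intros j Hj.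
      apply Hpair; [exact Hi|apply skip_lt; exact Hj|apply not_eq_sym, skip_neq].
Qed.

End Sums.
End Duality.
End Biorder.

Theorem proposition5p5
  (T : Type) (mul : T -> T -> T)
  (Hassoc : assoc_law mul) (Hreg : regular_law mul)
  (zero : T) (prime : T -> T)
  (HE1 : E1 mul zero) (HE2 : E2 mul zero prime) (HE3 : E3 mul prime)
  (n : nat) (Hn : 1 <= n) (e : nat -> T)
  (He : forall i, i < n -> idem mul (e i))
  (HM : forall i j, i < n -> j < n -> i <> j -> M_is_singleton mul (e i) (e j) zero) :
  (* the iterated sum is well defined at every stage *)
  (forall k, 1 <= k -> k <= n ->
     exists r, osum mul prime e k r /\ forall r', osum mul prime e k r' -> r' = r) /\
  (* L(e_1), ..., L(e_n) are independent in E/L *)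
  (forall i, i < n ->
     exists u, is_L_join mul (fun x => exists j, j < n /\ j <> i /\ x = e j) u /\
               L_meet_zero mul zero (e i) u) /\
  (* L(e_1) ∨ ... ∨ L(e_n) = L(e_1 ⊕ ... ⊕ e_n) *)
  (forall r, osum mul prime e n r ->
     is_L_join mul (fun x => exists j, j < n /\ x = e j) r).
Proof.
  assert (Hpair : forall i j, i < n -> j < n -> i <> j -> omega mul (e i) (prime (e j))).
  { intros i j Hi Hj Hij. apply omega_prime_of_M_zero with zero; auto. }
  assert (Hsums := osum_L_join Hassoc HE2 HE3 e He).
  specialize (Hsums ltac:(intros i j Hji Hi; apply Hpair; lia)).
  split; [|split].
  - intros [|k] Hk Hkn; [lia|].
    destruct (Hsums k Hkn) as [r [Hr _]].
    exists r. split; [exact Hr|]. intros r' Hr'. eapply osum_functional; eassumption.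
  - exact (L_independent Hassoc HE2 HE3 HE1 e He Hpair).
  - intros r Hr. destruct n as [|m]; [lia|].
    destruct (Hsums m (le_n _)) as [r0 [Hr0 [Jr0 _]]].
    replace r with r0 by (eapply osum_functional; eassumption). exact Jr0.
Qed.
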